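(* Let $(\Omega,\mathcal{F},\mathbb{P},\theta,\varphi)$ be a discrete-time random dynamical system on a separable Hilbert space $\mathcal{H}$. Assume there exist a $\varphi$-invariant random point $A(\omega)$, some $\mu>0$ and measurable functions $0<\alpha(\omega)<\beta(\omega)<1$ such that the set $$U(\omega)=\Big\{x_0\in\bar B(A(\omega),\alpha(\omega)):\ \exists (x_n)_{n\in\mathbb{N}}\text{ with }\varphi_1(\theta_{-n}\omega,x_n)=x_{n-1}\text{ and }\|x_n-A(\theta_{-n}\omega)\|\le\beta(\omega)e^{-\mu n}\text{ for all }n\ge0\Big\}$$ consists of more than one point for $\mathbb{P}$-almost every $\omega$. Assume further that there exists some $x_0(\omega)\in U(\omega)\setminus A(\omega)$ such that the corresponding points $x_n(\omega)$, $n\ge 0$, chosen as in the definition of $U(\omega)$, are random points. Then $\varphi$ does not synchronize.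
   Context: $(\Omega,\mathcal{F},\mathbb{P},\theta)$ is a metric dynamical system: $(\Omega,\mathcal{F},\mathbb{P})$ is a probability space and $(\theta_n)_{n\in\mathbb{Z}}$ is a group of measurable maps with $\theta_0=\mathrm{id}$ leaving $\mathbb{P}$ invariant. A random dynamical system is a jointly measurable map $\varphi:\mathbb{N}_0\times\Omega\times\mathcal{H}\to\mathcal{H}$ with $\varphi_0(\omega,x)=x$, $\varphi_{s+t}(\omega,x)=\varphi_t(\theta_s\omega,\varphi_s(\omega,x))$ and $x\mapsto\varphi_t(\omega,x)$ continuous; it is assumed that there is a family of sub-$\sigma$-algebras $(\mathcal{F}_{s,t})_{s\le t}$ with $\theta_r^{-1}(\mathcal{F}_{s,t})=\mathcal{F}_{s+r,t+r}$, $\mathcal{F}_{t,u}\subset\mathcal{F}_{s,v}$ for $s\le t\le u\le v$, and $\varphi_t(\cdot,x)$ $\mathcal{F}_{0,t}$-measurable. A family $\{A(\omega)\}_{\omega\in\Omega}$ of non-empty subsets of $\mathcal{H}$ is a random point (resp. random compact set) if it is $\mathbb{P}$-a.s. a single point (resp. compact set) and $\omega\mapsto\inf_{a\in A(\omega)}\|x-a\|$ is $\mathcal{F}$-measurable for each $x\in\mathcal{H}$; it is $\varphi$-invariant if $\varphi_t(\omega,A(\omega))=A(\theta_t\omega)$ for all $t\ge0$ and almost all $\omega$. A random compact set $A$ is a weak attractor if it is $\varphi$-invariant and for every compact $B\subset\mathcal{H}$, $\sup_{x\in B}\inf_{a\in A(\omega)}\|\varphi_t(\theta_{-t}\omega,x)-a\|\to0$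 in probability as $t\to\infty$. Synchronization occurs if there is a weak attractor $A(\omega)$ which is a singleton for $\mathbb{P}$-almost every $\omega$. $\bar B(x,r)$ is the closed ball of radius $r$ about $x$. *)

From HB Require Import structures.
From mathcomp Require Import all_boot all_order all_algebra.
From mathcomp Require Import all_classical all_reals all_analysis.
Set Implicit Arguments. Unset Strict Implicit. Unset Printing Implicit Defensive.
Import Order.TTheory GRing.Theory Num.Theory.
Import numFieldNormedType.Exports.
Local Open Scope classical_set_scope.
Local Open Scope ring_scope.

Section Defs.
Context (R : realType).

Definition is_inner_product (H : normedModType R) (ip : H -> H -> R) :=
  [/\ (forall x y, ip x y = ip y x),
      (forall a x y z, ip (a *: x + y) z = a * ip x z + ip y z)
    & (forall x, ip x x = `|x| ^+ 2)].

Definition separable_hilbert (H : completeNormedModType R) :=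
  (exists ip : H -> H -> R, is_inner_product ip) /\
  (exists D : set H, countable D /\ dense D).

Definition borelH (H : normedModType R) : set (set H) := <<s [set U | open U] >>.

Context (d : measure_display) (Omega : measurableType d) (P : probability Omega R).

Definition metric_dynamical_system (theta : int -> Omega -> Omega) :=
  [/\ (forall w, theta 0 w = w),
      (forall m n w, theta (m + n) w = theta m (theta n w)),
      (forall n, measurable_fun [set: Omega] (theta n))
    & (forall n (A : set Omega), measurable A -> P (theta n @^-1` A) = P A)].

Context (H : normedModType R).

Definition prod_sigma : set (set (Omega * H)) :=
  <<s [set A `*` B | A in [set A : set Omega | measurable A] &
                     B in borelH (H:=H)] >>.

(** ** Random dynamical system (discrete time N_0) over theta, with the
    standing filtration assumption. *)
Definition random_dynamical_system (theta : int -> Omega -> Omega)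
    (phi : nat -> Omega -> H -> H) :=
  [/\ (forall w x, phi 0%N w x = x),
      (forall s t w x, phi (s + t)%N w x = phi t (theta s%:Z w) (phi s w x)),
      (forall t w, continuous (phi t w)),
      (forall t B, borelH B ->
          prod_sigma ((fun p : Omega * H => phi t p.1 p.2) @^-1` B))
    & exists Fst : int -> int -> set (set Omega),
      [/\ (forall s t, s <= t ->
             sigma_algebra [set: Omega] (Fst s t) /\
             Fst s t `<=` [set A | measurable A]),
          (forall r s t, s <= t ->
             [set theta r @^-1` A | A in Fst s t] = Fst (s + r) (t + r)),
          (forall s t u v, s <= t -> t <= u -> u <= v -> Fst t u `<=` Fst s v)
        & (forall (t : nat) x B, borelH B ->
             Fst 0 t%:Z ((fun w => phi t w x) @^-1` B))]].

Definition dist_set (x : H) (A : set H) : R := inf [set `|x - a| | a in A].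

Definition random_point (A : Omega -> set H) :=
  [/\ (forall w, A w !=set0),
      {ae P, forall w, exists a, A w = [set a]}
    & (forall x, measurable_fun [set: Omega] (fun w => dist_set x (A w)))].

Definition random_compact_set (A : Omega -> set H) :=
  [/\ (forall w, A w !=set0),
      {ae P, forall w, compact (A w)}
    & (forall x, measurable_fun [set: Omega] (fun w => dist_set x (A w)))].

Definition phi_invariant (theta : int -> Omega -> Omega)
    (phi : nat -> Omega -> H -> H) (A : Omega -> set H) :=
  forall t : nat, {ae P, forall w, phi t w @` A w = A (theta t%:Z w)}.

Definition weak_attractor (theta : int -> Omega -> Omega)
    (phi : nat -> Omega -> H -> H) (A : Omega -> set H) :=
  [/\ random_compact_set A, phi_invariant theta phi A
    & forall B : set H, compact B -> forall eps : R, 0 < eps ->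
        (fun t : nat => P [set w | eps <
           sup [set dist_set (phi t (theta (- t%:Z) w) x) (A w) | x in B]])
        @ \oo --> 0%E].

Definition synchronizes (theta : int -> Omega -> Omega)
    (phi : nat -> Omega -> H -> H) :=
  exists A : Omega -> set H, weak_attractor theta phi A /\
    {ae P, forall w, exists a, A w = [set a]}.

Definition backward_seq (theta : int -> Omega -> Omega)
    (phi : nat -> Omega -> H -> H) (A : Omega -> set H) (mu : R)
    (beta : Omega -> R) (w : Omega) (x : nat -> H) :=
  (forall n : nat, phi 1%N (theta (- n.+1%:Z) w) (x n.+1) = x n) /\
  (forall n : nat, dist_set (x n) (A (theta (- n%:Z) w))
                   <= beta w * expR (- (mu * n%:R))).

Definition U_set (theta : int -> Omega -> Omega)
    (phi : nat -> Omega -> H -> H) (A : Omega -> set H) (mu : R)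
    (alpha beta : Omega -> R) (w : Omega) : set H :=
  [set x0 | dist_set x0 (A w) <= alpha w /\
     exists x : nat -> H, x 0%N = x0 /\ backward_seq theta phi A mu beta w x].

End Defs.

(* Suppose a weak attractor is almost surely a singleton {b}.  By the cocycle
   property, phi_t(theta_{-t} w) maps x_t(w) to x_0(w) and the point a' of
   A(theta_{-t} w) to the point a of A(w).  The random points A o theta_{-t}
   all have the law of A, and x_t lies within e^{-mu t} of them, so both
   families are uniformly tight: a single compact K contains x_t(w) and a'
   with probability at least 3/4, for every t.  As x_0 is not in A, the event
   |x_0 - a| > 2 eps has probability > 1/2 for some eps > 0; on it one of the
   two images is farther than eps from b.  Hence the pullback of K stays
   eps-away from the attractor with probability > 1/4 for every t, which
   contradicts weak attraction. *)

From HB Require Import structures.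
From mathcomp Require Import all_boot all_order all_algebra.
From mathcomp Require Import all_classical all_reals all_analysis.
From mathcomp Require Import lra.
Set Implicit Arguments. Unset Strict Implicit. Unset Printing Implicit Defensive.
Import Order.TTheory GRing.Theory Num.Theory.
Import numFieldNormedType.Exports.
Local Open Scope classical_set_scope.
Local Open Scope ring_scope.

Lemma exists_natSinv_lt (R : archiRealFieldType) (e : R) :
  0 < e -> exists n : nat, n.+1%:R^-1 < e.
Proof.
move=> e0; have [n _ /(_ n (leqnn n))] := near_infty_natSinv_lt (PosNum e0).
by exists n.
Qed.

Section dist_set.
Context {R : realType} {H : normedModType R}.
Implicit Types (x y z : H) (S : set H).

Lemma dist_set_le x S z : S z -> dist_set x S <= `|x - z|.
Proof. by move=> Sz; apply: ge_inf; [exists 0 => _ [? _ <-] | exists z]. Qed.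

Lemma dist_set_lipschitz x y S : S !=set0 ->
  dist_set x S <= `|x - y| + dist_set y S.
Proof.
move=> [z Sz]; rewrite -lerBlDl; apply: lb_le_inf; first by exists `|y - z|, z.
move=> _ [a Sa <-]; rewrite lerBlDl; apply: le_trans (dist_set_le x Sa) _.
by rewrite -(subrKA y) ler_normD.
Qed.

Lemma dist_set1 x y : dist_set x [set y] = `|x - y|.
Proof. by rewrite /dist_set image_set1 inf1. Qed.

Lemma continuous_dist_set S : S !=set0 -> continuous (fun x => dist_set x S).
Proof.
move=> S0 x; apply/cvgrPdist_lt => e e0; near=> y.
have xy : `|x - y| < e by near: y; exact: cvgr_dist_lt.
have := dist_set_lipschitz x y S0; have := dist_set_lipschitz y x S0.
by rewrite (distrC y x) ltr_norml => *; apply/andP; split; lra.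
Unshelve. all: by end_near. Qed.

Lemma continuous_dist_set_comp (f : H -> H) S :
  continuous f -> S !=set0 -> continuous (fun x => dist_set (f x) S).
Proof.
move=> cf S0 x; apply: (@continuous_comp _ _ _ f (fun y => dist_set y S)).
  exact: cf.
exact: continuous_dist_set.
Qed.

Lemma dist_set_le_sup (f : H -> H) (K S : set H) z :
  continuous f -> compact K -> S !=set0 -> K z ->
  dist_set (f z) S <= sup [set dist_set (f y) S | y in K].
Proof.
move=> cf cK S0 Kz; apply: ub_le_sup; last by exists z.
have : compact [set dist_set (f y) S | y in K].
  apply: continuous_compact => //; apply: continuous_subspaceT.
  exact: continuous_dist_set_comp.
move=> /compact_bounded[M [_ hM]]; exists (M + 1) => r Kr.
by apply: le_trans (ler_norm r) _; apply: (hM (M + 1) _ r Kr); rewrite ltrDl.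
Qed.

End dist_set.

(** * Compactness from finite nets *)

Lemma ultra_bigcup_seq (T : Type) (I : eqType) (F : set_system T)
    (B : I -> set T) (s : seq I) :
  UltraFilter F -> F (\bigcup_(i in [set` s]) B i) -> exists2 i, i \in s & F (B i).
Proof.
move=> UF; have PF : ProperFilter F := @ultra_proper _ F UF.
elim: s => [|i s IH] Fs.
  by exfalso; apply: (@filter_not_empty _ F); apply: filterS Fs => ? [].
have [Fi|FNi] := in_ultra_setVsetC (B i) UF; first by exists i; rewrite ?mem_head.
have [j js Fj] : exists2 j, j \in s & F (B j).
  apply: IH; apply: filterS (filterI Fs FNi) => t [[j]].
  by rewrite /= inE => /orP[/eqP -> //|js Bj] _; exists j.
by exists j => //; rewrite inE js orbT.
Qed.

Section finite_nets.
Context {R : realType} {H : normedModType R}.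

Definition cballs (s : seq H) (r : R) : set H :=
  [set z | exists2 y, y \in s & `|y - z| <= r].

Lemma closed_cballs s r : closed (cballs s r).
Proof.
rewrite (_ : cballs s r = \bigcup_(y in [set` s]) closed_ball_ Num.Def.normr y r) //.
by rewrite bigcup_seq; apply: closed_bigsetU => y _; exact: closed_closed_ball_.
Qed.

Lemma compact_finite_net (K : set H) (r : R) : compact K -> 0 < r ->
  exists s : seq H, (forall y, y \in s -> K y) /\ K `<=` cballs s r.
Proof.
rewrite compact_cover => /(_ H K (ball ^~ r)) cover r0.
have [|z Kz|D DK KD] := cover.
- by move=> y _; exact: ball_open.
- by exists z => //; exact: ballxx.
exists (finmap.enum_fset D); split => [y /DK|z /KD [y /= Dy]]; first by rewrite in_setE.
by rewrite -ball_normE => /ltW; exists y.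
Qed.

End finite_nets.

Lemma compact_closed_totally_bounded {R : realType} {H : completeNormedModType R}
    (K : set H) :
  closed K -> (forall k : nat, exists s, K `<=` cballs s k.+1%:R^-1) -> compact K.
Proof.
move=> cK tb; rewrite compact_ultra => F UF FK.
have PF : ProperFilter F := @ultra_proper _ F UF.
have cauchyF : cauchy F.
  apply: cauchy_exP => e e0.
  have [k ke] := exists_natSinv_lt e0; have [s Ks] := tb k.
  have [y _ Fy] := ultra_bigcup_seq UF (filterS Ks FK).
  exists y; apply: filterS Fy => z /= yz.
  by rewrite -ball_normE /ball_ /=; apply: le_lt_trans ke.
have cvgF : cvg F by exact: cauchy_cvg.
by exists (lim F); split => //; exact: (@closed_cvg _ _ F PF id K cK FK).
Qed.

Lemma dense_range_near {R : realType} {H : normedModType R} (u : nat -> H) :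
  dense (range u) -> forall x r, 0 < r -> exists n, `|x - u n| < r.
Proof.
move=> du x r r0.
have [z [xz [n _ nz]]] := du (ball x r) (ex_intro _ x (ballxx x r0)) (ball_open x r).
by exists n; move: xz; rewrite -nz -ball_normE.
Qed.

Lemma separable_hilbert_dense_seq {R : realType} {H : completeNormedModType R} :
  separable_hilbert H -> exists u : nat -> H, dense (range u).
Proof.
move=> [_ [D [cD dD]]].
have [x0 Dx0] : D !=set0.
  by have [z [_ Dz]] := dD setT (ex_intro _ 0 I) openT; exists z.
move: cD => /pfcard_geP[D0|/surjfunPex[u Du]]; first by rewrite D0 in Dx0.
by exists u; rewrite -Du.
Qed.

Section measure_facts.
Context {d : measure_display} {T : measurableType d} {R : realType}
  (mu : {measure set T -> \bar R}).

Lemma le_measure_ae (A B : set T) : measurable A -> measurable B ->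
  {ae mu, forall w, A w -> B w} -> (mu A <= mu B)%E.
Proof.
move=> mA mB [N [mN N0 NAB]].
apply: (@le_trans _ _ (mu (B `|` N))).
  apply: le_measure; rewrite ?inE //; first exact: measurableU.
  by move=> w Aw; apply: contrapT => /not_orP[nB nN]; apply/nN/NAB => /(_ Aw).
apply: le_trans (measureU2 _ mB mN) _.
by rewrite [X in (_ + X)%E]N0 adde0.
Qed.

Lemma ae_measure_preserving (f : T -> T) (Q : T -> Prop) :
  measurable_fun setT f -> (forall A, measurable A -> mu (f @^-1` A) = mu A) ->
  {ae mu, forall w, Q w} -> {ae mu, forall w, Q (f w)}.
Proof.
move=> mf fmu [N [mN N0 QN]].
have mfN : measurable (f @^-1` N) by rewrite -[_ @^-1` _]setTI; exact: mf.
by exists (f @^-1` N); split; rewrite ?fmu // => w /= nQ; exact: QN.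
Qed.

End measure_facts.

(** * Measurability of random sets *)

Section random_sets.
Context {R : realType} {d : measure_display} {Omega : measurableType d}.

Lemma measurable_set_gt (f : Omega -> R) e :
  measurable_fun setT f -> measurable [set w | e < f w].
Proof. by move=> mf; rewrite -preimage_itvoy -[X in measurable X]setTI; exact: mf. Qed.

Lemma measurable_set_lt (f : Omega -> R) e :
  measurable_fun setT f -> measurable [set w | f w < e].
Proof. by move=> mf; rewrite -preimage_itvNyo -[X in measurable X]setTI; exact: mf. Qed.

Context {H : normedModType R}.

Definition dist_measurable (S : Omega -> set H) :=
  forall y : H, measurable_fun [set: Omega] (fun w => dist_set y (S w)).

Definition far_event (s : seq H) (r : R) (S : Omega -> set H) : set Omega :=
  [set w | forall y, y \in s -> r < dist_set y (S w)].

Lemma measurable_far_event s r S : dist_measurable S -> measurable (far_event s r S).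
Proof.
move=> mS.
rewrite (_ : far_event s r S = \bigcap_(y in [set` s]) [set w | r < dist_set y (S w)]) //.
by rewrite bigcap_seq; apply: bigsetI_measurable => y _; exact: measurable_set_gt.
Qed.

Lemma far_event_sub s s' r S : {subset s <= s'} ->
  far_event s' r S `<=` far_event s r S.
Proof. by move=> ss' w Fw y /ss' /Fw. Qed.

Variables (u : nat -> H) (u_dense : dense (range u)).

Lemma measurable_dist_gt (S : Omega -> set H) (h : Omega -> H) e :
  (forall w, S w !=set0) -> dist_measurable S ->
  (forall y r, measurable [set w | `|y - h w| < r]) ->
  measurable [set w | e < dist_set (h w) (S w)].
Proof.
move=> S0 mS mh.
have -> : [set w | e < dist_set (h w) (S w)] =
    \bigcup_n \bigcup_m ([set w | `|u m - h w| < n.+1%:R^-1] `&`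
                         [set w | e + n.+1%:R^-1 < dist_set (u m) (S w)]).
  apply/seteqP; split => w /=.
  - move=> ew.
    have [n ne] : exists n : nat, n.+1%:R^-1 < (dist_set (h w) (S w) - e) / 2.
      by apply: exists_natSinv_lt; lra.
    have /(dense_range_near u_dense (h w))[m hm] : 0 < n.+1%:R^-1 :> R by [].
    exists n => //; exists m => //; split => /=; first by rewrite distrC.
    have := dist_set_lipschitz (h w) (u m) (S0 w).
    by move: hm ne; set c := n.+1%:R^-1 => *; lra.
  - move=> [n _ [m _ [/= hm ed]]].
    have := dist_set_lipschitz (u m) (h w) (S0 w).
    by move: hm ed; set c := n.+1%:R^-1 => *; lra.
apply: bigcupT_measurable => n; apply: bigcupT_measurable => m.
by apply: measurableI; [exact: mh | exact: measurable_set_gt].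
Qed.

Lemma measurable_sup_dist_gt (S : Omega -> set H) (f : Omega -> H -> H)
    (K : set H) e :
  (forall w, S w !=set0) -> dist_measurable S -> (forall w, continuous (f w)) ->
  (forall z y r, measurable [set w | `|y - f w z| < r]) -> compact K -> 0 < e ->
  measurable [set w | e < sup [set dist_set (f w z) (S w) | z in K]].
Proof.
move=> S0 mS cf mf cK e0.
have /choice[g gK] : forall n : nat,
    exists s, (forall y, y \in s -> K y) /\ K `<=` cballs s n.+1%:R^-1.
  by move=> n; apply: compact_finite_net.
(* By continuity of f w, the supremum over K exceeds e iff it already does on
   one of the finite nets g n. *)
have -> : [set w | e < sup [set dist_set (f w z) (S w) | z in K]] =
    \bigcup_n \bigcup_(y in [set` g n]) [set w | e < dist_set (f w y) (S w)].
  apply/seteqP; split => w /= esup; last first.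
    have [n _ [y gy ey]] := esup; apply: lt_le_trans ey _.
    exact: dist_set_le_sup (cf w) cK (S0 w) ((gK n).1 y gy).
  have [K0|/set0P ne] := eqVneq [set dist_set (f w z) (S w) | z in K] set0.
    by move: esup; rewrite K0 sup0 ltNge ltW.
  have [_ [z Kz <-] ez] := sup_gt ne esup.
  have /nbhs_ballP[δ δ0 zδ] : \forall t \near z, e < dist_set (f w t) (S w).
    exact: (cvgr_gt _ (@continuous_dist_set_comp _ _ _ _ (cf w) (S0 w) z) _ ez).
  have [n nδ] := exists_natSinv_lt δ0.
  have [y gy yz] := (gK n).2 z Kz.
  exists n => //; exists y => //; apply: zδ.
  by rewrite -ball_normE /= distrC; exact: le_lt_trans nδ.
apply: bigcupT_measurable => n; rewrite bigcup_seq.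
by apply: bigsetU_measurable => y _; exact: measurable_dist_gt.
Qed.

Lemma far_event_small (P : probability Omega R) (S : Omega -> set H) r δ :
  (forall w, S w !=set0) -> dist_measurable S -> 0 < r -> 0 < δ ->
  exists s, (P (far_event s r S) < δ%:E)%E.
Proof.
move=> S0 mS r0 δ0; pose B N := far_event [seq u j | j <- iota 0 N] r S.
have mB N : measurable (B N) by exact: measurable_far_event.
have B_dec : {homo B : n m / (n <= m)%N >-> (m <= n)%O}.
  move=> n m nm; rewrite subsetEset; apply: far_event_sub => _ /mapP[j jn ->].
  by apply: map_f; move: jn; rewrite !mem_iota /= !add0n => /leq_trans; apply.
have B0 : \bigcap_n B n = set0.
  apply/seteqP; split => // w Bw; have [z Sz] := S0 w.
  have [j zj] := dense_range_near u_dense z r0.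
  have := Bw j.+1 I (u j) (map_f _ _); rewrite mem_iota add0n ltnSn => /(_ isT).
  by have := dist_set_le (u j) Sz; rewrite distrC in zj; lra.
have PB0 : (P (B 0%N) < +oo)%E.
  by rewrite (le_lt_trans (probability_le1 P (mB 0%N))) ?ltry.
have := nonincreasing_cvg_mu PB0 mB (bigcapT_measurable mB) B_dec.
rewrite B0 measure0 => /(_ _ (nbhs_open_ereal_lt (f := fun=> δ) δ0))[N _ BN].
by exists [seq u j | j <- iota 0 N]; exact: BN N (leqnn N).
Qed.

End random_sets.

(** * Uniform tightness *)

Section uniform_tightness.
Context {R : realType} {d : measure_display} {Omega : measurableType d}
  (P : probability Omega R) {H : completeNormedModType R}.

(* Tightness phrased with finite nets instead of compact sets, so that only the
   measurability of the distance functions is needed. *)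
Definition uniformly_tight (T : Type) (Y : T -> Omega -> set H) :=
  forall r δ : R, 0 < r -> 0 < δ ->
    exists s : seq H, forall i, (P (far_event s r (Y i)) <= δ%:E)%E.

Lemma uniformly_tight_compact (T : Type) (Y : T -> Omega -> set H) (δ : R) :
  (forall i, dist_measurable (Y i)) -> uniformly_tight Y -> 0 < δ ->
  exists K : set H, compact K /\ forall i, exists M : set Omega,
    [/\ measurable M, (P M <= δ%:E)%E &
        forall w z, ~ M w -> Y i w = [set z] -> K z].
Proof.
move=> mY tY δ0.
have /choice[s sP] : forall k : nat, exists s, forall i,
    (P (far_event s k.+1%:R^-1 (Y i)) <= (δ / (2 ^ k.+1)%:R)%:E)%E.
  by move=> k; apply: tY; rewrite ?invr_gt0 ?divr_gt0 ?ltr0n ?expn_gt0.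
(* K is cut out by the closed neighbourhoods of the nets s k; the exceptional
   set of stage k costs delta / 2^(k+1). *)
exists (\bigcap_k cballs (s k) k.+1%:R^-1); split.
  apply: compact_closed_totally_bounded => [|k].
    by apply: closed_bigI => k _; exact: closed_cballs.
  by exists (s k) => z /(_ k I).
move=> i; have mM k : measurable (far_event (s k) k.+1%:R^-1 (Y i)).
  exact: measurable_far_event.
exists (\bigcup_k far_event (s k) k.+1%:R^-1 (Y i)); split.
- exact: bigcupT_measurable.
- have := @measure_sigma_subadditive _ _ _ P _ (fun k => far_event (s k) k.+1%:R^-1 (Y i))
    mM (bigcupT_measurable _ mM) (@subset_refl _ _).
  move=> /le_trans; apply.
  apply: (le_trans (@lee_nneseries R _ (fun k => (δ / (2 ^ k.+1)%:R)%:E) xpredT 0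
    (fun k _ _ => measure_ge0 _ _) (fun k _ => sP k i))).
  have := @epsilon_trick R (fun=> 0%E) δ xpredT (fun=> lexx 0%E) (ltW δ0).
  by rewrite (eseries0 (fun _ _ _ => erefl)) add0e; under eq_eseriesr do rewrite add0e.
- move=> w z Mw Yz k _; apply: contrapT => zk; apply: Mw; exists k => // y sy.
  by rewrite Yz dist_set1 ltNge; apply/negP => yz; apply: zk; exists y.
Qed.

Variables (u : nat -> H) (u_dense : dense (range u)).

Lemma uniformly_tight_near (Y Z : nat -> Omega -> set H) (rho : nat -> R) :
  (forall t w, Y t w !=set0) -> (forall t, dist_measurable (Y t)) ->
  (forall t, dist_measurable (Z t)) -> uniformly_tight Z ->
  rho t @[t --> \oo] --> 0 ->
  (forall t, {ae P, forall w y, dist_set y (Y t w) <= dist_set y (Z t w) + rho t}) ->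
  uniformly_tight Y.
Proof.
move=> Y0 mY mZ tZ rho0 YZ r δ r0 δ0.
have r20 : 0 < r / 2 by rewrite divr_gt0.
have [s0 s0P] := tZ _ _ r20 δ0.
have [N _ rhoN] := cvgr0_norm_le rho rho0 _ r20.
have /choice[s sP] : forall t, exists s, (P (far_event s r (Y t)) <= δ%:E)%E.
  by move=> t; have [s /ltW] := far_event_small u_dense P (Y0 t) (mY t) r0 δ0; exists s.
exists (s0 ++ flatten [seq s t | t <- iota 0 N]) => t.
have [tN|Nt] := ltnP t N.
  apply: le_trans (sP t); apply: le_measure; rewrite ?inE;
    try exact: measurable_far_event.
  apply: far_event_sub => y yt; rewrite mem_cat; apply/orP; right.
  by apply/flatten_mapP; exists t; rewrite // mem_iota.
apply: le_trans (s0P t); apply: le_measure_ae; try exact: measurable_far_event.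
apply: filterS (YZ t) => w YZw far y ys; have := far y; rewrite mem_cat ys => /(_ isT).
by have := YZw y; have := rhoN t Nt; have := ler_norm (rho t); lra.
Qed.

End uniform_tightness.

Lemma backward_orbit_pullback {Omega H : Type} (theta : int -> Omega -> Omega)
    (phi : nat -> Omega -> H -> H) (x : nat -> H) (w : Omega) :
  (forall m n w, theta (m + n) w = theta m (theta n w)) ->
  (forall w z, phi 0%N w z = z) ->
  (forall s t w z, phi (s + t)%N w z = phi t (theta s%:Z w) (phi s w z)) ->
  (forall n : nat, phi 1%N (theta (- n.+1%:Z) w) (x n.+1) = x n) ->
  forall t : nat, phi t (theta (- t%:Z) w) (x t) = x 0%N.
Proof.
move=> thetaD phi0 phiD back; elim => [|t IH]; first by rewrite phi0.
by rewrite -addn1 addnC phiD back -thetaD PoszD opprD addrA subrr add0r.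
Qed.

Lemma measurable_pullback_ball {R : realType} {d : measure_display}
    {Omega : measurableType d} {H : normedModType R}
    (theta : int -> Omega -> Omega) (phi : nat -> Omega -> H -> H) :
  (forall n, measurable_fun setT (theta n)) -> random_dynamical_system theta phi ->
  forall t z y r, measurable [set w | `|y - phi t (theta (- t%:Z) w) z| < r].
Proof.
move=> theta_mf [_ _ _ _ [F [Fsigma _ _ Fphi]]] t z y r.
have Bball : borelH (ball y r) by apply: sub_sigma_algebra; exact: ball_open.
have [_ Fmeas] := Fsigma 0 t%:Z ltac:(by []).
have := theta_mf (- t%:Z) measurableT _ (Fmeas _ (Fphi t z _ Bball)).
by rewrite setTI; congr measurable; apply/seteqP; split => w /=; rewrite -ball_normE.
Qed.

Section no_synchronization.
Context {R : realType} {d : measure_display} {Omega : measurableType d}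
  (P : probability Omega R) (theta : int -> Omega -> Omega)
  {H : completeNormedModType R} (phi : nat -> Omega -> H -> H)
  (A : Omega -> set H) (mu : R) (beta : Omega -> R) (x : nat -> Omega -> H)
  (u : nat -> H).
Hypotheses (u_dense : dense (range u))
  (theta0 : forall w, theta 0 w = w)
  (thetaD : forall m n w, theta (m + n) w = theta m (theta n w))
  (theta_measurable : forall n, measurable_fun setT (theta n))
  (theta_preserving : forall n B, measurable B -> P (theta n @^-1` B) = P B)
  (phi0 : forall w z, phi 0%N w z = z)
  (phiD : forall s t w z, phi (s + t)%N w z = phi t (theta s%:Z w) (phi s w z))
  (phi_continuous : forall t w, continuous (phi t w))
  (phi_measurable : forall t z y r,
     measurable [set w | `|y - phi t (theta (- t%:Z) w) z| < r])
  (A_nonempty : forall w, A w !=set0)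
  (A_single : {ae P, forall w, exists a, A w = [set a]})
  (A_measurable : dist_measurable A)
  (A_invariant : phi_invariant P theta phi A)
  (mu_gt0 : 0 < mu) (beta_le1 : forall w, beta w <= 1)
  (x_measurable : forall t y, measurable_fun setT (fun w => `|y - x t w|))
  (x_orbit : {ae P, forall w, ~ A w (x 0%N w) /\
                              backward_seq theta phi A mu beta w (x ^~ w)}).

Let rho (t : nat) := expR (- (mu * t%:R)).

Let rho_cvg0 : rho t @[t --> \oo] --> 0.
Proof.
have -> : rho = fun t => expR (- mu) ^+ t.
  by apply/funext => t; rewrite /rho -mulNr expRM_natr.
by apply: cvg_expr; rewrite ger0_norm ?expR_ge0 // expR_lt1 oppr_lt0.
Qed.

Let ae_shift (Q : Omega -> Prop) n :
  {ae P, forall w, Q w} -> {ae P, forall w, Q (theta n w)}.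
Proof. exact: (ae_measure_preserving (theta_measurable n) (theta_preserving n)). Qed.

Lemma pullback_singletons t : {ae P, forall w, exists a a', [/\
  A w = [set a], A (theta (- t%:Z) w) = [set a'],
  phi t (theta (- t%:Z) w) a' = a &
  phi t (theta (- t%:Z) w) (x t w) = x 0%N w]}.
Proof.
have A_single' := ae_shift (- t%:Z) A_single.
have A_invariant' := ae_shift (- t%:Z) (A_invariant t).
near=> w.
have [a Aa] : exists a, A w = [set a] by near: w; exact: A_single.
have [a' Aa'] : exists a', A (theta (- t%:Z) w) = [set a'].
  by near: w; exact: A_single'.
have [_ [back _]] : ~ A w (x 0%N w) /\ backward_seq theta phi A mu beta w (x ^~ w).
  by near: w.
have : phi t (theta (- t%:Z) w) @` A (theta (- t%:Z) w) =
       A (theta t%:Z (theta (- t%:Z) w)).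
  by near: w; exact: A_invariant'.
rewrite -thetaD subrr theta0 Aa Aa' image_set1 => img.
have phia : [set a] (phi t (theta (- t%:Z) w) a') by rewrite -img.
by exists a, a'; split => //; exact: (backward_orbit_pullback thetaD phi0 phiD back).
Unshelve. all: by end_near. Qed.

Lemma x_near_A t : {ae P, forall w y,
  dist_set y [set x t w] <= dist_set y (A (theta (- t%:Z) w)) + rho t}.
Proof.
apply: filterS2 x_orbit (ae_shift (- t%:Z) A_single) => w [_ [_ bound]] [a Aa] y.
have := bound t; rewrite /rho Aa !dist_set1 => xa.
have : beta w * expR (- (mu * t%:R)) <= expR (- (mu * t%:R)).
  by rewrite ler_piMl ?expR_ge0.
have := ler_distD a y (x t w); rewrite (distrC a (x t w)).
by move: xa; set e := expR _; set b := beta w * e => *; lra.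
Qed.

Lemma orbit_tight : exists K : set H, compact K /\ forall t, exists M : set Omega,
  [/\ measurable M, (P M <= (4^-1)%:E)%E &
      forall w, ~ M w -> K (x t w) /\ forall z, A (theta (- t%:Z) w) = [set z] -> K z].
Proof.
pose Z t w := A (theta (- t%:Z) w); pose Y t w := [set x t w].
have mZ t : dist_measurable (Z t).
  by move=> y; exact: measurableT_comp (A_measurable y) (theta_measurable _).
have mY t : dist_measurable (Y t).
  by move=> y; rewrite /Y; under eq_fun do rewrite dist_set1; exact: x_measurable.
have tZ : uniformly_tight P Z.
  (* Z t has the law of A. *)
  move=> r δ r0 δ0.
  have [s /ltW sP] := far_event_small u_dense P A_nonempty A_measurable r0 δ0.
  exists s => t.
  rewrite (_ : far_event s r (Z t) = theta (- t%:Z) @^-1` far_event s r A) //.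
  by rewrite theta_preserving //; exact: measurable_far_event.
have tY : uniformly_tight P Y.
  apply: (uniformly_tight_near u_dense _ mY mZ tZ rho_cvg0 x_near_A).
  by move=> t w; exists (x t w).
have e0 : 0 < 8^-1 :> R by [].
have [KZ [cKZ KZP]] := uniformly_tight_compact mZ tZ e0.
have [KY [cKY KYP]] := uniformly_tight_compact mY tY e0.
exists (KY `|` KZ); split => [|t]; first exact: compactU.
have [MZ [mMZ PMZ MZK]] := KZP t; have [MY [mMY PMY MYK]] := KYP t.
exists (MY `|` MZ); split; first exact: measurableU.
  apply: le_trans (measureU2 _ mMY mMZ) _; apply: le_trans (leeD PMY PMZ) _.
  by rewrite -EFinD lee_fin; lra.
move=> w /not_orP[nMY nMZ]; split; first by left; exact: MYK nMY _.
by move=> z Az; right; exact: MZK nMZ Az.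
Qed.

Definition separation_event (m : nat) : set Omega :=
  [set w | m.+1%:R^-1 < dist_set (x 0%N w) (A w)].

Lemma measurable_separation_event m : measurable (separation_event m).
Proof.
rewrite /separation_event.
apply: (measurable_dist_gt u_dense _ A_nonempty A_measurable) => y r.
exact: measurable_set_lt (x_measurable 0 y).
Qed.

Lemma separation_event_large : exists m, ((2^-1)%:E < P (separation_event m))%E.
Proof.
have sep_nondecreasing : {homo separation_event : n m / (n <= m)%N >-> (n <= m)%O}.
  move=> n m nm; rewrite subsetEset => w; apply: le_lt_trans.
  by rewrite lef_pV2 ?posrE ?ler_nat.
have msep := measurable_separation_event.
have msepU := bigcupT_measurable _ msep.
have sep_full : P (\bigcup_m separation_event m) = 1%E.
  apply/eqP; rewrite eq_le probability_le1 //=.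
  rewrite -(probability_setT P) le_measure_ae //.
  apply: filterS2 x_orbit A_single => w [xA _] [a Aa] _.
  have /exists_natSinv_lt[m ?] : 0 < dist_set (x 0%N w) (A w).
    rewrite Aa dist_set1 normr_gt0 subr_eq0.
    by apply: contra_notN xA => /eqP->; rewrite Aa.
  by exists m.
have half_lt1 : 2^-1 < 1 :> R by rewrite invf_lt1 ?ltr1n.
have := nondecreasing_cvg_mu (mu := P) msep msepU sep_nondecreasing.
set L := (X in _ --> X); have -> : L = 1%E by exact: sep_full.
move=> /(_ _ (nbhs_open_ereal_gt (f := fun=> 2^-1) half_lt1))[N _ PN].
by exists N; exact: PN N (leqnn N).
Qed.

Lemma pullback_deviation_large (At : Omega -> set H) (K : set H) (M : set Omega) t m :
  (forall w, At w !=set0) -> dist_measurable At ->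
  {ae P, forall w, exists b, At w = [set b]} ->
  compact K -> measurable M -> (P M <= (4^-1)%:E)%E ->
  (forall w, ~ M w -> K (x t w) /\ forall z, A (theta (- t%:Z) w) = [set z] -> K z) ->
  ((2^-1)%:E < P (separation_event m))%E ->
  ((4^-1)%:E < P [set w | (m.+1%:R^-1 / 2 <
     sup [set dist_set (phi t (theta (- t%:Z) w) z) (At w) | z in K])%R])%E.
Proof.
move=> At0 mAt At1 cK mM PM MK Psep; set D := [set w | _ < _].
have mD : measurable D.
  apply: (measurable_sup_dist_gt u_dense At0 mAt
    (fun w => @phi_continuous t (theta (- t%:Z) w)) (phi_measurable t) cK).
  by rewrite divr_gt0.
(* The pullback maps x_t to x_0 and a' to a, and |x_0 - a| <= |x_0 - b| + |a - b|. *)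
have sep_sub : {ae P, forall w, separation_event m w -> (D `|` M) w}.
  apply: filterS2 (pullback_singletons t) At1 => w [a [a' [Aa Aa' phia phix]]] [b Bb] sep.
  have [Mw|/MK[Kx KA]] := pselect (M w); [by right | left].
  have := dist_set_le_sup (@phi_continuous t (theta (- t%:Z) w)) cK (At0 w) Kx.
  have := dist_set_le_sup (@phi_continuous t (theta (- t%:Z) w)) cK (At0 w) (KA a' Aa').
  rewrite /D /= phix phia Bb !dist_set1 => supa supx.
  move: sep; rewrite /separation_event /= Aa dist_set1 => sep.
  have := ler_distD b (x 0%N w) a; rewrite (distrC b a) => tri.
  have [lt_xb|lt_ab] : m.+1%:R^-1 / 2 < `|x 0%N w - b| \/ m.+1%:R^-1 / 2 < `|a - b|.
    by move: sep; set c := m.+1%:R^-1 => sep; case: ltP => ?; [left | right; lra].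
  - exact: lt_le_trans lt_xb supx.
  - exact: lt_le_trans lt_ab supa.
have sepDM : (P (separation_event m) <= P (D `|` M))%E.
  apply: le_measure_ae sep_sub; [exact: measurable_separation_event | exact: measurableU].
have -> : 4^-1 = 2^-1 - 4^-1 :> R by lra.
rewrite EFinB lteBlDr // (lt_le_trans Psep) // (le_trans sepDM) //.
by rewrite (le_trans (measureU2 _ mD mM)) // leeD2l.
Qed.

Lemma not_synchronizes : ~ synchronizes P theta phi.
Proof.
move=> [At [[[At0 _ mAt] _ attracts] At1]].
have [K [cK tightK]] := orbit_tight.
have [m Psep] := separation_event_large.
have e0 : 0 < m.+1%:R^-1 / 2 :> R by rewrite divr_gt0.
have quarter_gt0 : 0 < 4^-1 :> R by [].
have [N _ PN] := attracts K cK _ e0 _ (nbhs_open_ereal_lt (f := fun=> 4^-1) quarter_gt0).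
have [M [mM PM MK]] := tightK N.
have := pullback_deviation_large At0 mAt At1 cK mM PM MK Psep.
by move=> /lt_trans /(_ (PN N (leqnn N))); rewrite ltxx.
Qed.

End no_synchronization.

Theorem proposition2 (R : realType) (d : measure_display)
  (Omega : measurableType d) (P : probability Omega R)
  (theta : int -> Omega -> Omega)
  (H : completeNormedModType R)
  (phi : nat -> Omega -> H -> H)
  (A : Omega -> set H) (mu : R) (alpha beta : Omega -> R) :
  separable_hilbert H ->
  metric_dynamical_system P theta ->
  random_dynamical_system theta phi ->
  random_point P A ->
  phi_invariant P theta phi A ->
  0 < mu ->
  measurable_fun [set: Omega] alpha ->
  measurable_fun [set: Omega] beta ->
  (forall w, 0 < alpha w /\ alpha w < beta w /\ beta w < 1) ->
  {ae P, forall w, exists x y, U_set theta phi A mu alpha beta w x /\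
                               U_set theta phi A mu alpha beta w y /\ x <> y} ->
  (exists x : nat -> Omega -> H,
     (forall n, random_point P (fun w => [set x n w])) /\
     {ae P, forall w, dist_set (x 0%N w) (A w) <= alpha w /\ ~ A w (x 0%N w) /\
                      backward_seq theta phi A mu beta w (fun n => x n w)}) ->
  ~ synchronizes P theta phi.
Proof.
move=> /separable_hilbert_dense_seq[u u_dense] [theta0 thetaD theta_mf theta_pres] rds.
move=> [A0 A1 mA] A_inv mu0 _ _ alpha_beta _ [x [x_random x_orbit]].
have [phi0 phiD phi_cont _ _] := rds.
apply: (not_synchronizes (x := x) u_dense theta0 thetaD theta_mf theta_pres
  phi0 phiD phi_cont (measurable_pullback_ball theta_mf rds) A0 A1 mA A_inv mu0
  (fun w => ltW (alpha_beta w).2.2)).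
- move=> t y; have [_ _ /(_ y)] := x_random t.
  by under eq_fun do rewrite dist_set1.
- by apply: filterS x_orbit => w [].
Qed.
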